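(* Let $k$ be a field of characteristic $0$, let $\mathfrak n=\langle X,Z_1,Z_2\rangle$ be the $3$-dimensional Heisenberg GNLA with $\deg X=\deg Z_1=-1$, $\deg Z_2=-2$ and only non-zero bracket $[X,Z_1]=Z_2$, let $W=\langle Z_1\rangle\subset\mathfrak n_{-1}$, and for $s\ge2$ let $V=\langle Y_1,\dots,Y_s\rangle$, $\deg Y_i=-i$, be the $\mathfrak n$-module with $X.Y_i=Y_{i+1}$ ($i<s$), $X.Y_s=0$, and $Z_1,Z_2$ acting trivially. Then every special extension $\mathfrak m$ of $\mathfrak n$ by $V$ is isomorphic (as a graded Lie algebra) either to the semidirect product $\mathfrak n\ltimes V$ (non-zero brackets $[X,Z_1]=Z_2$, $[X,Y_i]=Y_{i+1}$, $i=1,\dots,s-1$), or, only when $s=3$, to the $6$-dimensional graded Lie algebra $\langle X,Z_1,Z_2,Y_1,Y_2,Y_3\rangle$ with non-zero brackets $[X,Y_1]=Y_2$, $[X,Y_2]=Y_3$, $[X,Z_1]=Z_2$, $[Z_1,Z_2]=Y_3$; this latter algebra is not isomorphic to the semidirect product. In particular, up to isomorphism there is exactly one non-trivial special extension of the $3$-dimensional Heisenberg algebra.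
   Context: A GNLA is a negatively graded Lie algebra $\bigoplus_{i\ge1}\mathfrak n_{-i}$ generated by $\mathfrak n_{-1}$. A special extension of $\mathfrak n$ by the graded $\mathfrak n$-module $V$ is a graded Lie algebra $\mathfrak m$ fitting into an exact sequence of graded Lie algebras $0\to V\to\mathfrak m\to\mathfrak n\to0$ in which $V$ is an abelian ideal and the action of $\mathfrak n=\mathfrak m/V$ on $V$ induced by the bracket is the given module structure; equivalently $\mathfrak m=\mathfrak n\oplus V$ with bracket $[(x_1,v_1),(x_2,v_2)]=([x_1,x_2],x_1.v_2-x_2.v_1+\alpha(x_1,x_2))$ for some degree-preserving $2$-cocycle $\alpha:\wedge^2\mathfrak n\to V$. *)

From HB Require Import structures.
From mathcomp Require Import all_boot all_order all_algebra.
Set Implicit Arguments. Unset Strict Implicit. Unset Printing Implicit Defensive.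
Import Order.TTheory GRing.Theory Num.Theory.
Local Open Scope ring_scope.

Section Defs.
Variable k : fieldType.

Definition cf (N : nat) (u : 'rV[k]_N) (i : nat) : k :=
  match (insub i : option 'I_N) with Some j => u 0 j | None => 0 end.

(* A finite-dimensional graded algebra is given on coordinates 'rV_N with a
   homogeneous basis e_0,...,e_(N-1); dg j = d means e_j has degree -d. *)
Definition homog (N : nat) (dg : nat -> nat) (d : nat) (u : 'rV[k]_N) : Prop :=
  forall j : 'I_N, dg (val j) <> d -> u 0 j = 0.

Definition graded_iso (N M : nat)
    (dg1 : nat -> nat) (br1 : 'rV[k]_N -> 'rV[k]_N -> 'rV[k]_N)
    (dg2 : nat -> nat) (br2 : 'rV[k]_M -> 'rV[k]_M -> 'rV[k]_M) : Prop :=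
  exists f : {linear 'rV[k]_N -> 'rV[k]_M},
    bijective f /\
    (forall d u, homog dg1 d u <-> homog dg2 d (f u)) /\
    (forall u v, f (br1 u v) = br2 (f u) (f v)).

(* Heisenberg GNLA n = <X, Z1, Z2> : coordinates 0 = X, 1 = Z1, 2 = Z2 *)
Definition dgn (i : nat) : nat := if i == 2%N then 2%N else 1%N.
Definition brn (x y : 'rV[k]_3) : 'rV[k]_3 :=
  \row_(j < 3) (if val j == 2%N then cf x 0 * cf y 1 - cf x 1 * cf y 0 else 0).

(* module V = <Y_1,...,Y_s>: coordinate i corresponds to Y_(i+1), degree -(i+1) *)
Definition dgV (i : nat) : nat := i.+1.
Definition actV (s : nat) (x : 'rV[k]_3) (v : 'rV[k]_s) : 'rV[k]_s :=
  \row_(j < s) (if val j == 0%N then 0 else cf x 0 * cf v (val j).-1).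

Definition special_cocycle (s : nat) (al : 'rV[k]_3 -> 'rV[k]_3 -> 'rV[k]_s) : Prop :=
  [/\ (forall (a : k) x y z, al (a *: x + y) z = a *: al x z + al y z),
      (forall (a : k) x y z, al z (a *: x + y) = a *: al z x + al z y),
      (forall x, al x x = 0),
      (forall d e x y, homog dgn d x -> homog dgn e y -> homog dgV (d + e) (al x y)) &
      (forall x y z,
         actV x (al y z) - actV y (al x z) + actV z (al x y)
         - al (brn x y) z + al (brn x z) y - al (brn y z) x = 0)].

(* m = n (+) V on coordinates 'rV_(3+s): 0,1,2 = X,Z1,Z2 ; 3+i = Y_(i+1) *)
Definition dgm (i : nat) : nat := if (i < 3)%N then dgn i else (i - 2)%N.
Definition npart (s : nat) (w : 'rV[k]_(3 + s)) : 'rV[k]_3 := \row_(j < 3) cf w (val j).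
Definition vpart (s : nat) (w : 'rV[k]_(3 + s)) : 'rV[k]_s := \row_(j < s) cf w (3 + val j).
Definition glue (s : nat) (x : 'rV[k]_3) (v : 'rV[k]_s) : 'rV[k]_(3 + s) :=
  \row_(j < 3 + s) (if (val j < 3)%N then cf x (val j) else cf v (val j - 3)).

Definition ext_br (s : nat) (al : 'rV[k]_3 -> 'rV[k]_3 -> 'rV[k]_s)
    (w1 w2 : 'rV[k]_(3 + s)) : 'rV[k]_(3 + s) :=
  let x1 := npart w1 in let x2 := npart w2 in
  let v1 := vpart w1 in let v2 := vpart w2 in
  glue (brn x1 x2) (actV x1 v2 - actV x2 v1 + al x1 x2).

Definition semidirect_br (s : nat) := ext_br (fun _ _ : 'rV[k]_3 => (0 : 'rV[k]_s)).

(* the 6-dim algebra <X,Z1,Z2,Y1,Y2,Y3> (coordinates 0..5), degrees given by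
   dgm: [X,Y1]=Y2, [X,Y2]=Y3, [X,Z1]=Z2, [Z1,Z2]=Y3 *)
Definition brB (u v : 'rV[k]_6) : 'rV[k]_6 :=
  \row_(j < 6)
    (if val j == 2%N then cf u 0 * cf v 1 - cf u 1 * cf v 0
     else if val j == 4%N then cf u 0 * cf v 3 - cf u 3 * cf v 0
     else if val j == 5%N then cf u 0 * cf v 4 - cf u 4 * cf v 0
                               + (cf u 1 * cf v 2 - cf u 2 * cf v 1)
     else 0).

End Defs.

From HB Require Import structures.
From mathcomp Require Import all_boot all_order all_algebra ring.
Import GRing.Theory.
Set Implicit Arguments. Unset Strict Implicit. Unset Printing Implicit Defensive.
Local Open Scope ring_scope.

(* An alternating bilinear map on n = <X, Z1, Z2> is determined by its values on
   the three pairs of basis vectors, and the grading forces alpha(X, Z1) = a Y2,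
   alpha(X, Z2) = b Y3 and alpha(Z1, Z2) = c Y3.  The cocycle identity at
   (X, Z1, Z2) reduces to X.alpha(Z1, Z2) = c Y4 = 0, so c = 0 unless s = 3.
   The graded change of basis Z1 |-> Z1 + t(a + b) Y1, Z2 |-> Z2 + t b Y2,
   Y_i |-> t Y_i carries the cocycle (a, b, c) to (0, 0, t c): with t = 1 this
   gives the semidirect product when c = 0, with t = c^-1 the algebra where
   [Z1, Z2] = Y3 otherwise.  These two are not isomorphic because Z2 is central
   of degree -2 in the semidirect product, whereas in the other algebra a
   degree -2 element is detected by its brackets with X and Z1. *)

Section HeisenbergExtensions.
Variable k : fieldType.
Implicit Types (a b c q r t : k).

Lemma cf_rowE N (F : nat -> k) i :
  cf (\row_(j < N) F (val j)) i = if (i < N)%N then F i else 0.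
Proof.
rewrite /cf; case: insubP => [j _ <-|/negbTE-> //]; by rewrite mxE ltn_ord.
Qed.

Lemma cf_out N (u : 'rV[k]_N) i : (N <= i)%N -> cf u i = 0.
Proof. by rewrite /cf; case: insubP => // j; rewrite ltnNge => /negbTE->. Qed.

Lemma cf_val N (u : 'rV[k]_N) (j : 'I_N) : cf u (val j) = u 0 j.
Proof.
by rewrite /cf (insubT (fun i => i < N)%N (ltn_ord j)) /=; congr (u 0 _); apply: val_inj.
Qed.

Lemma cf_inj N (u v : 'rV[k]_N) : (forall i, (i < N)%N -> cf u i = cf v i) -> u = v.
Proof. by move=> uv; apply/rowP => j; rewrite -!cf_val; apply: uv (ltn_ord j). Qed.

Lemma cfD N (u v : 'rV[k]_N) i : cf (u + v) i = cf u i + cf v i.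
Proof. by rewrite /cf; case: insubP => *; rewrite ?mxE ?addr0. Qed.

Lemma cfZ N a (u : 'rV[k]_N) i : cf (a *: u) i = a * cf u i.
Proof. by rewrite /cf; case: insubP => *; rewrite ?mxE ?mulr0. Qed.

Lemma cfN N (u : 'rV[k]_N) i : cf (- u) i = - cf u i.
Proof. by rewrite /cf; case: insubP => *; rewrite ?mxE ?oppr0. Qed.

Lemma cf0 N i : cf (0 : 'rV[k]_N) i = 0.
Proof. by rewrite /cf; case: insubP => *; rewrite ?mxE. Qed.

Definition cfE := (cfD, cfZ, cfN, cf0).

Lemma homog_cf N dg d (u : 'rV[k]_N) i : homog dg d u -> dg i <> d -> cf u i = 0.
Proof. by rewrite /cf => hu; case: insubP => // j _ <-; apply: hu. Qed.

Lemma homog_of_cf N dg d (u : 'rV[k]_N) :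
  (forall i, (i < N)%N -> dg i <> d -> cf u i = 0) -> homog dg d u.
Proof. by move=> hu j; rewrite -cf_val; apply: hu (ltn_ord j). Qed.

Lemma graded_iso_congr N M dg1 dg2 (br1 br1' : 'rV[k]_N -> 'rV[k]_N -> 'rV[k]_N)
    (br2 br2' : 'rV[k]_M -> 'rV[k]_M -> 'rV[k]_M) :
  graded_iso dg1 br1 dg2 br2 ->
  (forall u v, br1 u v = br1' u v) -> (forall u v, br2 u v = br2' u v) ->
  graded_iso dg1 br1' dg2 br2'.
Proof.
by case=> f [bij_f [graded_f br_f]] eq1 eq2; exists f; split; [|split] => // u v; rewrite -eq1 -eq2.
Qed.

Lemma graded_iso_center N M dg1 dg2 (br1 : 'rV[k]_N -> 'rV[k]_N -> 'rV[k]_N)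
    (br2 : 'rV[k]_M -> 'rV[k]_M -> 'rV[k]_M) d (z : 'rV[k]_M) :
  graded_iso dg1 br1 dg2 br2 ->
  (forall w, homog dg1 d w -> (forall u, br1 u w = 0) -> w = 0) ->
  homog dg2 d z -> (forall u, br2 u z = 0) -> z = 0.
Proof.
case=> f [[g fK gK] [graded_f br_f]] center1 hz central_z.
suff gz0 : g z = 0 by rewrite -[z]gK gz0 linear0.
apply: center1 => [|u]; first by apply/graded_f; rewrite gK.
by apply: (can_inj fK); rewrite br_f gK central_z linear0.
Qed.

Lemma homog_mul_cf N dg d e (x y : 'rV[k]_N) i j :
  homog dg d x -> homog dg e y -> (dg i + dg j <> d + e)%N -> cf x i * cf y j = 0.
Proof.
move=> hx hy hij; have [di|] := eqVneq (dg i) d; last first.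
  by move=> /eqP ndi; rewrite (homog_cf hx ndi) mul0r.
by rewrite (homog_cf hy) ?mulr0 // => dj; apply: hij; rewrite di dj.
Qed.

Definition wedge N (x y : 'rV[k]_N) (i j : nat) : k := cf x i * cf y j - cf x j * cf y i.

Lemma homog_wedge N dg d e (x y : 'rV[k]_N) i j :
  homog dg d x -> homog dg e y -> (dg i + dg j <> d + e)%N -> wedge x y i j = 0.
Proof.
move=> hx hy hij; rewrite /wedge !(homog_mul_cf hx hy) ?subrr //.
by rewrite addnC.
Qed.

Definition deltav N (m : nat) : 'rV[k]_N := \row_(j < N) (val j == m)%:R.

Lemma cf_deltav N m i : cf (deltav N m) i = ((i == m) && (i < N)%N)%:R.
Proof. by rewrite /deltav (cf_rowE N (fun i => (i == m)%:R)) andbC; case: (i < N)%N. Qed.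

Lemma homog_deltav N dg m : homog dg (dg m) (deltav N m).
Proof.
by apply: homog_of_cf => i _ dim; rewrite cf_deltav; case: eqP dim => [->|].
Qed.

Lemma homog_dgV_deltav s d (v : 'rV[k]_s) : homog dgV d.+1 v -> v = cf v d *: deltav s d.
Proof.
move=> hv; apply: cf_inj => i lt_is; rewrite cfZ cf_deltav lt_is andbT.
have [->|ne_id] := eqVneq i d; first by rewrite mulr1.
by rewrite mulr0 (homog_cf hv) // => -[/eqP]; rewrite (negbTE ne_id).
Qed.

Lemma expand_deltav3 (x : 'rV[k]_3) :
  x = cf x 0 *: deltav 3 0 + cf x 1 *: deltav 3 1 + cf x 2 *: deltav 3 2.
Proof. by apply: cf_inj => -[|[|[|]]] // _; rewrite !cfE !cf_deltav /=; ring. Qed.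

Lemma cf_npart s (w : 'rV[k]_(3 + s)) i : (i < 3)%N -> cf (npart w) i = cf w i.
Proof. by move=> lt_i3; rewrite /npart (cf_rowE 3 (cf w)) lt_i3. Qed.

Lemma cf_vpart s (w : 'rV[k]_(3 + s)) i : cf (vpart w) i = cf w i.+3.
Proof.
rewrite /vpart (cf_rowE s (fun i => cf w (3 + i))).
by case: ltnP => // le_si; rewrite cf_out // -(add3n i) leq_add2l.
Qed.

Lemma cf_glue_n s (x : 'rV[k]_3) (v : 'rV[k]_s) i : (i < 3)%N -> cf (glue x v) i = cf x i.
Proof.
move=> lt_i3; rewrite /glue (cf_rowE (3 + s) (fun i => if (i < 3)%N then cf x i else cf v (i - 3))).
by rewrite lt_i3 (ltn_addr s lt_i3).
Qed.

Lemma cf_glue_v s (x : 'rV[k]_3) (v : 'rV[k]_s) i : cf (glue x v) i.+3 = cf v i.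
Proof.
rewrite /glue (cf_rowE (3 + s) (fun i => if (i < 3)%N then cf x i else cf v (i - 3))) /=.
by rewrite -(add3n i) ltn_add2l addKn; case: ltnP => // le_si; rewrite cf_out.
Qed.

Lemma npart_glue s (x : 'rV[k]_3) (v : 'rV[k]_s) : npart (glue x v) = x.
Proof. by apply: cf_inj => i lt_i3; rewrite cf_npart // cf_glue_n. Qed.

Lemma vpart_glue s (x : 'rV[k]_3) (v : 'rV[k]_s) : vpart (glue x v) = v.
Proof. by apply: cf_inj => i _; rewrite cf_vpart cf_glue_v. Qed.

Lemma glue_parts s (w : 'rV[k]_(3 + s)) : glue (npart w) (vpart w) = w.
Proof.
by apply: cf_inj => -[|[|[|i]]] _; rewrite ?cf_glue_v ?cf_vpart // cf_glue_n // cf_npart.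
Qed.

Lemma cf_brn (x y : 'rV[k]_3) i : cf (brn x y) i = if i == 2%N then wedge x y 0 1 else 0.
Proof. by rewrite /brn (cf_rowE 3 (fun i => if i == 2%N then _ else _)); case: i => [|[|[|]]]. Qed.

Lemma cf_actV s (x : 'rV[k]_3) (v : 'rV[k]_s) i :
  cf (actV x v) i = if (i < s)%N then (if i == 0%N then 0 else cf x 0 * cf v i.-1) else 0.
Proof. by rewrite /actV (cf_rowE s (fun i => if i == 0%N then 0 else cf x 0 * cf v i.-1)). Qed.

Lemma actV_is_linear s (x : 'rV[k]_3) : linear (@actV k s x).
Proof.
move=> a u v; apply: cf_inj => i lt_is; rewrite !cfE !cf_actV lt_is.
by case: eqP => _; rewrite ?cfE; ring.
Qed.

HB.instance Definition _ s x :=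
  GRing.isLinear.Build k _ _ _ (@actV k s x) (@actV_is_linear s x).

Lemma actV_deltav s (x : 'rV[k]_3) m : actV x (deltav s m) = cf x 0 *: deltav s m.+1.
Proof.
apply: cf_inj => -[|i] lt_is; rewrite cfZ cf_actV lt_is !cf_deltav ?mulr0 //=.
by rewrite eqSS lt_is (ltnW lt_is).
Qed.

Lemma cf_brB (u v : 'rV[k]_6) i :
  cf (brB u v) i =
    if i == 2%N then wedge u v 0 1
    else if i == 4%N then wedge u v 0 3
    else if i == 5%N then wedge u v 0 4 + wedge u v 1 2
    else 0.
Proof.
rewrite /brB (cf_rowE 6 (fun i =>
  if i == 2%N then _ else if i == 4%N then _ else if i == 5%N then _ else _)).
by case: i => [|[|[|[|[|[|]]]]]].
Qed.

Section AlternatingForms.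
Variables (N : nat) (al : 'rV[k]_3 -> 'rV[k]_3 -> 'rV[k]_N).
Hypothesis linear_l : forall a x y z, al (a *: x + y) z = a *: al x z + al y z.
Hypothesis linear_r : forall a x y z, al z (a *: x + y) = a *: al z x + al z y.
Hypothesis alternating : forall x, al x x = 0.

Lemma alternating_expand3 x y :
  al x y = wedge x y 0 1 *: al (deltav 3 0) (deltav 3 1)
         + wedge x y 0 2 *: al (deltav 3 0) (deltav 3 2)
         + wedge x y 1 2 *: al (deltav 3 1) (deltav 3 2).
Proof.
have al0l z : al 0 z = 0.
  by have := linear_l 1 0 0 z; rewrite !scale1r addr0 => h; rewrite -[LHS](addrK (al 0 z)) -h subrr.
have al0r z : al z 0 = 0.
  by have := linear_r 1 0 0 z; rewrite !scale1r addr0 => h; rewrite -[LHS](addrK (al z 0)) -h subrr.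
have addl u v z : al (u + v) z = al u z + al v z by rewrite -[u]scale1r linear_l !scale1r.
have addr u v z : al z (u + v) = al z u + al z v by rewrite -[u]scale1r linear_r !scale1r.
have scall a u z : al (a *: u) z = a *: al u z by rewrite -[a *: u]addr0 linear_l al0l addr0.
have scalr a u z : al z (a *: u) = a *: al z u by rewrite -[a *: u]addr0 linear_r al0r addr0.
have anti u v : al v u = - al u v.
  have := alternating (u + v); rewrite addl !addr !alternating add0r addr0 => h.
  by apply/eqP; rewrite -addr_eq0 addrC h.
rewrite {1}(expand_deltav3 x) {1}(expand_deltav3 y) !addl !addr !scall !scalr !alternating.
rewrite (anti (deltav 3 0) (deltav 3 1)) (anti (deltav 3 0) (deltav 3 2)).
rewrite (anti (deltav 3 1) (deltav 3 2)).
by apply: cf_inj => i _; rewrite !cfE /wedge; ring.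
Qed.

End AlternatingForms.

Definition cocycle_abc s a b c (x y : 'rV[k]_3) : 'rV[k]_s :=
  (a * wedge x y 0 1) *: deltav s 1 + (b * wedge x y 0 2 + c * wedge x y 1 2) *: deltav s 2.

Lemma special_cocycleE s (al : 'rV[k]_3 -> 'rV[k]_3 -> 'rV[k]_s) : special_cocycle al ->
  forall x y, al x y = cocycle_abc s (cf (al (deltav 3 0) (deltav 3 1)) 1)
                                     (cf (al (deltav 3 0) (deltav 3 2)) 2)
                                     (cf (al (deltav 3 1) (deltav 3 2)) 2) x y.
Proof.
case=> linear_l linear_r alternating graded _ x y.
have deg01 : homog dgV 2 (al (deltav 3 0) (deltav 3 1)) :=
  graded _ _ _ _ (@homog_deltav 3 dgn 0) (@homog_deltav 3 dgn 1).
have deg02 : homog dgV 3 (al (deltav 3 0) (deltav 3 2)) :=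
  graded _ _ _ _ (@homog_deltav 3 dgn 0) (@homog_deltav 3 dgn 2).
have deg12 : homog dgV 3 (al (deltav 3 1) (deltav 3 2)) :=
  graded _ _ _ _ (@homog_deltav 3 dgn 1) (@homog_deltav 3 dgn 2).
rewrite (alternating_expand3 linear_l linear_r alternating).
rewrite {1}(homog_dgV_deltav deg01) {1}(homog_dgV_deltav deg02) {1}(homog_dgV_deltav deg12).
by apply: cf_inj => i _; rewrite /cocycle_abc !cfE; ring.
Qed.

Lemma special_cocycle_Z1Z2 s (al : 'rV[k]_3 -> 'rV[k]_3 -> 'rV[k]_s) :
  special_cocycle al -> s <> 3%N -> cf (al (deltav 3 1) (deltav 3 2)) 2 = 0.
Proof.
move=> hal ne_s3; have [le_s3|lt_3s] := leqP s 3.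
  by rewrite cf_out // -ltnS ltn_neqAle le_s3 andbT; apply/eqP.
have [_ _ _ _ cocycle] := hal; have alE := special_cocycleE hal.
set a := cf (al (deltav 3 0) (deltav 3 1)) 1 in alE.
set b := cf (al (deltav 3 0) (deltav 3 2)) 2 in alE.
set c := cf (al (deltav 3 1) (deltav 3 2)) 2 in alE *.
move/(congr1 (fun v => cf v 3)): (cocycle (deltav 3 0) (deltav 3 1) (deltav 3 2)).
rewrite !alE !cfE !cf_actV lt_3s /cocycle_abc /wedge !cfE !cf_brn !cf_deltav /=.
rewrite (ltnW lt_3s) /= => <-.
ring.
Qed.

Lemma special_cocycle_normal_form s (al : 'rV[k]_3 -> 'rV[k]_3 -> 'rV[k]_s) :
  special_cocycle al ->
  exists a b c, (forall x y, al x y = cocycle_abc s a b c x y) /\ (s <> 3%N -> c = 0).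
Proof.
move=> hal; do 3 eexists; split; first exact: special_cocycleE hal.
exact: special_cocycle_Z1Z2.
Qed.

Lemma homog_cocycle_abc s a b c d e (x y : 'rV[k]_3) :
  homog dgn d x -> homog dgn e y -> homog dgV (d + e) (cocycle_abc s a b c x y).
Proof.
move=> hx hy; apply: homog_of_cf => i _ ne_de; rewrite /cocycle_abc !cfE !cf_deltav.
case: i ne_de => [|[|[|i]]] ne_de /=; rewrite ?mulr0 ?addr0 //.
  by rewrite (homog_wedge hx hy) ?mulr0 ?mul0r ?add0r.
by rewrite [wedge x y 0 2](homog_wedge hx hy) // [wedge x y 1 2](homog_wedge hx hy) //; ring.
Qed.

Lemma cocycle_abc_special a b c : special_cocycle (cocycle_abc 3 a b c).
Proof.
split.
- by move=> a' x y z; apply: cf_inj => i _; rewrite /cocycle_abc /wedge !cfE; ring.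
- by move=> a' x y z; apply: cf_inj => i _; rewrite /cocycle_abc /wedge !cfE; ring.
- by move=> x; apply: cf_inj => i _; rewrite /cocycle_abc /wedge !cfE; ring.
- by move=> d e x y; apply: homog_cocycle_abc.
- move=> x y z; apply: cf_inj => -[|[|[|]]] // _.
  all: by rewrite !cfE !cf_actV /cocycle_abc /wedge !cfE !cf_brn /= /wedge !cf_deltav /=; ring.
Qed.

Definition change_basis s q r t (w : 'rV[k]_(3 + s)) : 'rV[k]_(3 + s) :=
  glue (npart w) (t *: (vpart w + (q * cf w 1) *: deltav s 0 + (r * cf w 2) *: deltav s 1)).

Lemma cf_change_basis_n s q r t (w : 'rV[k]_(3 + s)) i :
  (i < 3)%N -> cf (change_basis q r t w) i = cf w i.
Proof. by move=> lt_i3; rewrite cf_glue_n // cf_npart. Qed.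

Lemma cf_change_basis_v s q r t (w : 'rV[k]_(3 + s)) i :
  cf (change_basis q r t w) i.+3 =
    t * (cf w i.+3 + q * cf w 1 * cf (deltav s 0) i + r * cf w 2 * cf (deltav s 1) i).
Proof. by rewrite cf_glue_v !cfE cf_vpart. Qed.

Lemma change_basis_is_linear s q r t : linear (@change_basis s q r t).
Proof.
move=> a u v; apply: cf_inj => -[|[|[|i]]] _;
  by rewrite !cfE ?cf_change_basis_v ?cf_change_basis_n // !cfE; ring.
Qed.

HB.instance Definition _ s q r t :=
  GRing.isLinear.Build k _ _ _ (@change_basis s q r t) (@change_basis_is_linear s q r t).

Lemma change_basisK s q r t : t != 0 ->
  cancel (@change_basis s q r t) (change_basis (- (t * q)) (- (t * r)) t^-1).
Proof.
move=> t0 w; rewrite {1}/change_basis npart_glue vpart_glue !cf_change_basis_n //.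
rewrite -[RHS]glue_parts; congr glue.
by apply: cf_inj => i _; rewrite !cfE; field.
Qed.

Lemma homog_change_basis s q r t d (w : 'rV[k]_(3 + s)) :
  homog dgm d w -> homog dgm d (change_basis q r t w).
Proof.
move=> hw; apply: homog_of_cf => -[|[|[|i]]] _ ne_d.
1-3: by rewrite cf_change_basis_n // (homog_cf hw ne_d).
rewrite cf_change_basis_v (homog_cf hw ne_d) !cf_deltav.
case: i ne_d => [|[|i]] ne_d; rewrite ?andbT ?andbF /=.
- by rewrite (homog_cf hw (i := 1) ne_d); ring.
- by rewrite (homog_cf hw (i := 2) ne_d); ring.
- by ring.
Qed.

Lemma npart_change_basis s q r t (w : 'rV[k]_(3 + s)) : npart (change_basis q r t w) = npart w.
Proof. exact: npart_glue. Qed.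

Lemma vpart_change_basis s q r t (w : 'rV[k]_(3 + s)) :
  vpart (change_basis q r t w) =
    t *: (vpart w + (q * cf w 1) *: deltav s 0 + (r * cf w 2) *: deltav s 1).
Proof. exact: vpart_glue. Qed.

Lemma change_basis_ext_br s a b c t (w1 w2 : 'rV[k]_(3 + s)) :
  change_basis (a + b) b t (ext_br (cocycle_abc s a b c) w1 w2) =
  ext_br (cocycle_abc s 0 0 (t * c)) (change_basis (a + b) b t w1) (change_basis (a + b) b t w2).
Proof.
rewrite /ext_br {1}/change_basis npart_glue vpart_glue !cf_glue_n // !npart_change_basis.
rewrite !vpart_change_basis; congr glue.
rewrite !linearZ !linearD !linearZ /= !actV_deltav.
by apply: cf_inj => j _; rewrite /cocycle_abc !cfE !cf_brn /= /wedge !cf_npart //; ring.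
Qed.

Lemma graded_iso_cocycle_abc s a b c t : t != 0 ->
  graded_iso dgm (ext_br (cocycle_abc s a b c)) dgm (ext_br (cocycle_abc s 0 0 (t * c))).
Proof.
move=> t0; exists (change_basis (a + b) b t); split; [|split].
- exists (change_basis (- (t * (a + b))) (- (t * b)) t^-1); first exact: change_basisK.
  have := change_basisK (- (t * (a + b))) (- (t * b)) (invr_neq0 t0).
  by rewrite !mulrN !opprK !mulKf // invrK.
- move=> d w; split; first exact: homog_change_basis.
  by move/(homog_change_basis (- (t * (a + b))) (- (t * b)) t^-1); rewrite change_basisK.
- exact: change_basis_ext_br.
Qed.

Lemma ext_br_congr s (al al' : 'rV[k]_3 -> 'rV[k]_3 -> 'rV[k]_s) :
  (forall x y, al x y = al' x y) -> forall w1 w2, ext_br al w1 w2 = ext_br al' w1 w2.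
Proof. by move=> eq_al w1 w2; rewrite /ext_br eq_al. Qed.

Lemma ext_br_cocycle0 s (w1 w2 : 'rV[k]_(3 + s)) :
  ext_br (cocycle_abc s 0 0 0) w1 w2 = semidirect_br w1 w2.
Proof. by apply: ext_br_congr => x y; rewrite /cocycle_abc !mul0r add0r !scale0r addr0. Qed.

Lemma ext_br_cocycle_Z1Z2 (u v : 'rV[k]_(3 + 3)) : ext_br (cocycle_abc 3 0 0 1) u v = brB u v.
Proof.
apply: cf_inj => -[|[|[|i]]] lt_i; rewrite cf_brB /ext_br ?cf_glue_v ?cf_glue_n // ?cf_brn //=.
  by rewrite /wedge !cf_npart.
case: i lt_i => [|[|[|i]]] // _.
all: by rewrite /cocycle_abc !cfE !cf_actV !cf_deltav /wedge ?cf_vpart ?cf_npart //=; ring.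
Qed.

Lemma semidirect_br_Z2 s (w : 'rV[k]_(3 + s)) : semidirect_br w (deltav (3 + s) 2) = 0.
Proof.
apply: cf_inj => -[|[|[|i]]] lt_i.
all: rewrite cf0 /semidirect_br /ext_br ?cf_glue_v ?cf_glue_n // ?cf_brn //=.
- by rewrite /wedge !cf_npart // !cf_deltav /=; ring.
- by rewrite !cfE !cf_actV ?cf_vpart ?cf_npart // !cf_deltav /= mulr0 mul0r !if_same subrr addr0.
Qed.

Lemma brB_center_deg2 (w : 'rV[k]_6) : homog dgm 2 w -> (forall u, brB u w = 0) -> w = 0.
Proof.
move=> hw central.
have w4 : cf w 4 = 0.
  move: (congr1 (fun v => cf v 5) (central (deltav 6 0))).
  by rewrite cf_brB cf0 /wedge !cf_deltav /= => <-; ring.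
have w2 : cf w 2 = 0.
  move: (congr1 (fun v => cf v 5) (central (deltav 6 1))).
  by rewrite cf_brB cf0 /wedge !cf_deltav /= => <-; ring.
by apply: cf_inj => -[|[|[|[|[|[|]]]]]] // _; rewrite cf0 ?w2 ?w4 // (homog_cf hw).
Qed.

Lemma brB_not_iso_semidirect : ~ graded_iso dgm (@brB k) dgm (@semidirect_br k 3).
Proof.
move=> iso; have := graded_iso_center iso brB_center_deg2 (@homog_deltav 6 dgm 2).
move=> /(_ (fun w => semidirect_br_Z2 w)) /(congr1 (fun v => cf v 2)).
by rewrite cf_deltav cf0 /=; apply/eqP; rewrite oner_eq0.
Qed.

End HeisenbergExtensions.

Theorem mainTheorem8 (k : fieldType) (char0 : [pchar k] =i pred0)
    (s : nat) (hs : (2 <= s)%N) :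
  (forall al : 'rV[k]_3 -> 'rV[k]_3 -> 'rV[k]_s,
     special_cocycle al ->
     graded_iso dgm (ext_br al) dgm (@semidirect_br k s)
     \/ (s = 3%N /\ graded_iso dgm (ext_br al) dgm (@brB k)))
  /\ ~ graded_iso dgm (@brB k) dgm (@semidirect_br k 3)
  /\ (s = 3%N -> exists al : 'rV[k]_3 -> 'rV[k]_3 -> 'rV[k]_s,
        special_cocycle al /\ graded_iso dgm (ext_br al) dgm (@brB k)).
Proof.
split; [|split].
- move=> al /special_cocycle_normal_form[a [b [c [alE c0]]]].
  have iso (t : k) : t != 0 -> graded_iso dgm (ext_br al) dgm (ext_br (cocycle_abc s 0 0 (t * c))).
    move=> t0; apply: (graded_iso_congr (graded_iso_cocycle_abc s a b c t0)) => // u v.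
    by apply: ext_br_congr => x y; rewrite alE.
  have [c_eq0|c_neq0] := eqVneq c 0.
    left; apply: (graded_iso_congr (iso 1 (oner_neq0 k))) => // u v.
    by rewrite c_eq0 mulr0 ext_br_cocycle0.
  have s3 : s = 3%N by apply: contra_neq_eq c_neq0 => /eqP; exact: c0.
  subst s; right; split=> //.
  apply: (graded_iso_congr (iso c^-1 (invr_neq0 c_neq0))) => // u v.
  by rewrite mulVf // ext_br_cocycle_Z1Z2.
- exact: brB_not_iso_semidirect.
- move=> s3; subst s; exists (cocycle_abc 3 0 0 1); split; first exact: cocycle_abc_special.
  apply: (graded_iso_congr (graded_iso_cocycle_abc 3 0 0 1 (oner_neq0 k))) => // u v.
  by rewrite mul1r ext_br_cocycle_Z1Z2.
Qed.
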